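(* Every M-set in a Minkowski space is countable.
   Context: A Minkowski space is a finite-dimensional real normed space $(X,\|\cdot\|)$. For a set $S\subseteq X$, its midpoint set is $M(S)=\{\tfrac12(x+y): x,y\in S,\ x\neq y\}$. A set $S\subseteq X$ is an M-set if every vector in $M(S)$ has norm exactly $1$ and every vector in $S$ has norm strictly greater than $1$. *)

From Stdlib Require Import Reals.
From Stdlib Require Fin.
Open Scope R_scope.

Definition vec (n : nat) := Fin.t n -> R.

Definition vadd {n : nat} (x y : vec n) : vec n := fun i => x i + y i.
Definition vscale {n : nat} (a : R) (x : vec n) : vec n := fun i => a * x i.
Definition vzero (n : nat) : vec n := fun _ => 0.

(* A norm on R^n.  Every finite-dimensional real normed space is linearly
   isometric to (R^n, N) for such a norm N, n = its dimension. *)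
Record is_norm {n : nat} (N : vec n -> R) : Prop := {
  norm_nonneg : forall x, 0 <= N x;
  norm_zero : forall x, N x = 0 -> x = vzero n;
  norm_scale : forall a x, N (vscale a x) = Rabs a * N x;
  norm_triangle : forall x y, N (vadd x y) <= N x + N y
}.

Definition midpoint_set {n : nat} (S : vec n -> Prop) : vec n -> Prop :=
  fun m => exists x y, S x /\ S y /\ x <> y /\ m = vscale (/ 2) (vadd x y).

Definition is_M_set {n : nat} (N : vec n -> R) (S : vec n -> Prop) : Prop :=
  (forall m, midpoint_set S m -> N m = 1) /\ (forall x, S x -> 1 < N x).

Definition countable_set {T : Type} (S : T -> Prop) : Prop :=
  exists f : T -> nat, forall x y, S x -> S y -> f x = f y -> x = y.

From Stdlib Require Import Reals Lra Lia List ZArith Cantor FunctionalExtensionality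
  ClassicalEpsilon FinFun.
Import ListNotations.
Open Scope R_scope.

(* For distinct x, y in an M-set, x is the midpoint (x + y)/2, of norm 1, plus
   (x - y)/2, so N (x - y) >= 2 (N x - 1): the points of norm at least 1 + d are
   2d-separated.  Since every norm on R^n is bounded by a multiple of the sup
   norm, two such points cannot lie in the same cell of a fine enough grid.
   Coding a point by the index k of a layer it belongs to and by its cell in
   the grid of mesh 1/(k+1) is therefore injective on the M-set. *)

Fixpoint fin_enum (n : nat) : list (Fin.t n) :=
  match n with 0%nat => [] | S m => Fin.F1 :: map Fin.FS (fin_enum m) end.

Lemma fin_enum_complete n (i : Fin.t n) : In i (fin_enum n).
Proof.
  induction i as [m|m i IH]; simpl; [now left|right].
  now apply in_map.
Qed.

Lemma fin_enum_NoDup n : NoDup (fin_enum n).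
Proof.
  induction n as [|n IH]; simpl; constructor.
  - intros H. apply in_map_iff in H. destruct H as [i [H _]]. discriminate.
  - apply Injective_map_NoDup; [|exact IH].
    intros i j. apply Fin.FS_inj.
Qed.

Lemma Cantor_to_nat_inj p q : Cantor.to_nat p = Cantor.to_nat q -> p = q.
Proof.
  intros H. now rewrite <- (Cantor.cancel_of_to p), <- (Cantor.cancel_of_to q), H.
Qed.

Definition nat_of_Z (z : Z) : nat := Cantor.to_nat (Z.to_nat z, Z.to_nat (- z)).

Lemma nat_of_Z_inj a b : nat_of_Z a = nat_of_Z b -> a = b.
Proof.
  unfold nat_of_Z; intros H. apply Cantor_to_nat_inj in H. injection H. lia.
Qed.

Fixpoint nat_of_list (l : list Z) : nat :=
  match l with
  | [] => 0%nat
  | a :: l => S (Cantor.to_nat (nat_of_Z a, nat_of_list l))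
  end.

Lemma nat_of_list_inj l1 l2 : nat_of_list l1 = nat_of_list l2 -> l1 = l2.
Proof.
  revert l2; induction l1 as [|a l1 IH]; intros [|b l2] H;
    cbn [nat_of_list] in H; try discriminate; auto.
  apply Nat.succ_inj, Cantor_to_nat_inj in H. injection H as Hab Hl.
  f_equal; [now apply nat_of_Z_inj | now apply IH].
Qed.

Lemma up_eq_close (M a b : R) : 0 < M ->
  up (M * a) = up (M * b) -> Rabs (a - b) < / M.
Proof.
  intros HM Hup.
  destruct (archimed (M * a)) as [Ha1 Ha2], (archimed (M * b)) as [Hb1 Hb2].
  rewrite Hup in Ha1, Ha2.
  replace (a - b) with ((M * a - M * b) * / M) by (field; lra).
  rewrite Rabs_mult, (Rabs_right (/ M)) by (apply Rle_ge, Rlt_le, Rinv_0_lt_compat; lra).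
  rewrite <- (Rmult_1_l (/ M)) at 2.
  apply Rmult_lt_compat_r; [now apply Rinv_0_lt_compat|].
  apply Rabs_def1; lra.
Qed.

Lemma countable_of_layered_separated (n : nat) (S : vec n -> Prop)
  (layer : vec n -> nat) :
  (forall x y, S x -> S y -> layer x = layer y ->
     (forall i, Rabs (x i - y i) < / (INR (layer x) + 1)) -> x = y) ->
  countable_set S.
Proof.
  intros Hsep.
  set (cell := fun x : vec n => map (fun i => up ((INR (layer x) + 1) * x i)) (fin_enum n)).
  exists (fun x => Cantor.to_nat (layer x, nat_of_list (cell x))).
  intros x y Sx Sy Hxy.
  apply Cantor_to_nat_inj in Hxy. injection Hxy as Hlayer Hcell.
  apply nat_of_list_inj in Hcell. unfold cell in Hcell.
  rewrite map_ext_in_iff in Hcell.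
  apply Hsep; auto. intros i.
  apply up_eq_close; [pose proof (pos_INR (layer x)); lra|].
  rewrite Hcell at 1 by apply fin_enum_complete. now rewrite Hlayer.
Qed.

Section Norm.
Variables (n : nat) (N : vec n -> R).
Hypothesis HN : is_norm N.

Definition vsub (x y : vec n) : vec n := vadd x (vscale (-1) y).

Definition unit_vec (i : Fin.t n) : vec n :=
  fun j => if Fin.eq_dec i j then 1 else 0.

Definition coord_sum (l : list (Fin.t n)) (v : vec n) : vec n :=
  fold_right (fun i acc => vadd (vscale (v i) (unit_vec i)) acc) (vzero n) l.

Lemma coord_sum_apply l v j : NoDup l ->
  coord_sum l v j = if in_dec Fin.eq_dec j l then v j else 0.
Proof.
  induction l as [|a l IH]; intros Hl; simpl; [reflexivity|].
  inversion Hl as [|? ? Hal Hl']; subst.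
  unfold vadd, vscale, unit_vec at 1. rewrite IH by assumption.
  destruct (Fin.eq_dec a j) as [->|Haj].
  - destruct (in_dec Fin.eq_dec j l); [contradiction|].
    destruct (in_dec Fin.eq_dec j (j :: l)) as [_|H]; [ring|now destruct H; left].
  - destruct (in_dec Fin.eq_dec j l) as [Hj|Hj], (in_dec Fin.eq_dec j (a :: l)) as [Hj'|Hj'].
    + ring.
    + now destruct Hj'; right.
    + now destruct Hj' as [->|].
    + ring.
Qed.

Lemma coord_sum_fin_enum v : coord_sum (fin_enum n) v = v.
Proof.
  apply functional_extensionality; intros j.
  rewrite coord_sum_apply by apply fin_enum_NoDup.
  destruct (in_dec Fin.eq_dec j (fin_enum n)) as [_|H]; [reflexivity|].
  now destruct H; apply fin_enum_complete.
Qed.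

Lemma norm_vzero : N (vzero n) = 0.
Proof.
  replace (vzero n) with (vscale 0 (vzero n)).
  - rewrite (norm_scale _ HN), Rabs_R0; ring.
  - apply functional_extensionality; intros i; unfold vscale, vzero; ring.
Qed.

Definition basis_norm_sum : R :=
  fold_right (fun i s => N (unit_vec i) + s) 0 (fin_enum n).

Lemma norm_le_sup_coord v eps : (forall i, Rabs (v i) <= eps) ->
  N v <= eps * basis_norm_sum.
Proof.
  intros Hv. rewrite <- (coord_sum_fin_enum v). unfold basis_norm_sum.
  induction (fin_enum n) as [|a l IH]; simpl.
  - rewrite norm_vzero; lra.
  - eapply Rle_trans; [apply (norm_triangle _ HN)|].
    rewrite (norm_scale _ HN).
    assert (Rabs (v a) * N (unit_vec a) <= eps * N (unit_vec a)).
    { apply Rmult_le_compat_r; [apply (norm_nonneg _ HN)|apply Hv]. }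
    lra.
Qed.

Lemma M_set_separated S : is_M_set N S -> forall x y, S x -> S y -> x <> y ->
  2 * (N x - 1) <= N (vsub x y).
Proof.
  intros [Hmid _] x y Sx Sy Hxy.
  assert (Hm : N (vscale (/ 2) (vadd x y)) = 1) by (apply Hmid; exists x, y; auto).
  assert (Hx : x = vadd (vscale (/ 2) (vadd x y)) (vscale (/ 2) (vsub x y))).
  { apply functional_extensionality; intros i; unfold vsub, vadd, vscale; field. }
  pose proof (norm_triangle _ HN (vscale (/ 2) (vadd x y)) (vscale (/ 2) (vsub x y))) as T.
  rewrite <- Hx, Hm, (norm_scale _ HN), Rabs_right in T by lra.
  lra.
Qed.

End Norm.

Lemma exists_layer (C d : R) : 0 < d -> exists k : nat, C < (INR k + 1) * d.
Proof.
  intros Hd. destruct (INR_unbounded (C / d)) as [k Hk].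
  exists k. apply (Rmult_gt_compat_r d) in Hk; [|lra].
  unfold Rdiv in Hk. rewrite Rmult_assoc, Rinv_l in Hk by lra. nra.
Qed.

Theorem mainTheorem3 (n : nat) (N : vec n -> R) (HN : is_norm N)
  (S : vec n -> Prop) (HS : is_M_set N S) : countable_set S.
Proof.
  set (C := basis_norm_sum n N).
  set (layer := fun x => epsilon (inhabits 0%nat)
                  (fun k => C < (INR k + 1) * (2 * (N x - 1)))).
  assert (Hlayer : forall x, S x -> C < (INR (layer x) + 1) * (2 * (N x - 1))).
  { intros x Sx.
    apply (epsilon_spec (inhabits 0%nat) (fun k => C < (INR k + 1) * (2 * (N x - 1)))).
    apply exists_layer. destruct HS as [_ Hgt1]. specialize (Hgt1 x Sx). lra. }
  apply (countable_of_layered_separated n S layer).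
  intros x y Sx Sy _ Hclose.
  destruct (classic (x = y)) as [|Hxy]; [assumption|exfalso].
  set (M := INR (layer x) + 1).
  assert (HM : 0 < M) by (pose proof (pos_INR (layer x)); unfold M; lra).
  assert (Hfar := M_set_separated n N HN S HS x y Sx Sy Hxy).
  assert (Hnear : N (vsub n x y) <= / M * C).
  { apply norm_le_sup_coord; auto. intros i. left.
    unfold vsub, vadd, vscale. replace (x i + -1 * y i) with (x i - y i) by ring.
    apply Hclose. }
  specialize (Hlayer x Sx). fold M in Hlayer.
  assert (M * (2 * (N x - 1)) <= C); [|lra].
  replace C with (M * (/ M * C)) by (field; lra).
  apply Rmult_le_compat_l; lra.
Qed.
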